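(* Let $n\ge2$ and $0\le\epsilon<1/2$, and let $U_0,\dots,U_T$ be a quantum query algorithm with $T$ queries to the comparison oracle which, for every permutation $\sigma$ of $\{0,\dots,n-1\}$, outputs $\sigma$ with probability at least $1-\epsilon$ (via a fixed measurement of the final state). With $s_t$ defined as below, $s_T\le 2\sqrt{\epsilon(1-\epsilon)}\,s_0$.
   Context: For a permutation $\sigma$ of $\{0,\dots,n-1\}$, the comparison matrix $M_\sigma\in\{0,1\}^{n\times n}$ has $(M_\sigma)_{i,j}=1$ if $\sigma(i)\le\sigma(j)$ and $0$ otherwise. $H$ is the Hilbert space spanned by orthonormal vectors $|i,j,b,c\rangle$, $0\le i,j\le n-1$, $b\in\{0,1\}$, $c\in\{0,1\}^w$ for some fixed $w\ge0$, and $O_\sigma|i,j,b,c\rangle=|i,j,b\oplus(M_\sigma)_{i,j},c\rangle$. For $0\le t\le T$, $|\psi_\sigma^t\rangle=U_tO_\sigma U_{t-1}O_\sigma\cdots U_1O_\sigma U_0|\vec0\rangle$. For $0\le k\le n-2$, $1\le d\le n-k-1$, $\sigma^{(k,d)}=(k+d,k+d-1,\dots,k)\circ\sigma$ (the cycle sends $k+d\mapsto k+d-1\mapsto\cdots\mapsto k\mapsto k+d$); $w(\sigma,\tau)=1/d$ if $\tau=\sigma^{(k,d)}$ for some such $k,d$, and $0$ otherwise. Finally $s_t=\sum_{\sigma,\tau}w(\sigma,\tau)\,|\langle\psi^t_\sigma|\psi^t_\tau\rangle|$. *)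

(* Complex scalars: any numClosedFieldType C (e.g. algC, or R[i]). *)
From HB Require Import structures.
From mathcomp Require Import all_boot all_order all_algebra all_fingroup.
Set Implicit Arguments. Unset Strict Implicit. Unset Printing Implicit Defensive.
Import Order.TTheory GRing.Theory Num.Theory.
Local Open Scope ring_scope.

(* Basis labels |i,j,b,c> with i,j < n, b a bit, c in {0,1}^w. *)
Definition Idx (n w : nat) : finType :=
  ('I_n * 'I_n * bool * {ffun 'I_w -> bool})%type.

(* Vectors of H and linear operators on H (matrices in the basis |i,j,b,c>). *)
Definition vect (C : numClosedFieldType) n w := Idx n w -> C.
Definition oper (C : numClosedFieldType) n w := Idx n w -> Idx n w -> C.

Section Q.
Variables (C : numClosedFieldType) (n w : nat).

Definition apply (A : oper C n w) (v : vect C n w) : vect C n w :=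
  fun x => \sum_y A x y * v y.

Definition dotp (u v : vect C n w) : C := \sum_x (u x)^* * v x.

(* U^* U = I (equivalent to unitarity in finite dimension) *)
Definition unitary (A : oper C n w) : Prop :=
  forall x y, \sum_z (A z x)^* * A z y = (x == y)%:R.

Definition psd (A : oper C n w) : Prop := forall v, 0 <= dotp v (apply A v).

Definition povm (E : {perm 'I_n} -> oper C n w) : Prop :=
  (forall s, psd (E s)) /\ (forall x y, \sum_s E s x y = (x == y)%:R).

Definition cmpM (s : {perm 'I_n}) (i j : 'I_n) : bool := (s i <= s j)%N.

(* O_sigma |i,j,b,c> = |i,j,b xor M_{ij},c>  (an involution on basis labels) *)
Definition oracle (s : {perm 'I_n}) (v : vect C n w) : vect C n w :=
  fun x => let '(i, j, b, c) := x in v (i, j, addb b (cmpM s i j), c).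

Definition ket0 : vect C n w :=
  fun x => let '(i, j, b, c) := x in
    ([&& nat_of_ord i == 0%N, nat_of_ord j == 0%N, ~~ b & [forall k, ~~ c k]])%:R.

Fixpoint psi (U : nat -> oper C n w) (s : {perm 'I_n}) (t : nat) : vect C n w :=
  match t with
  | 0 => apply (U 0%N) ket0
  | t'.+1 => apply (U t) (oracle s (psi U s t'))
  end.
End Q.

(* the cycle (k+d, k+d-1, ..., k): k+d -> k+d-1 -> ... -> k -> k+d *)
Definition cyc (k d m : nat) : nat :=
  if (k < m <= k + d)%N then m.-1 else if m == k then (k + d)%N else m.

(* tau = sigma^{(k,d)} = cyc_{k,d} o sigma, with 0 <= k <= n-2, 1 <= d <= n-k-1 *)
Definition is_move n (s t : {perm 'I_n}) (k d : nat) : bool :=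
  [&& (1 <= d)%N, (k + d <= n.-1)%N & [forall i, nat_of_ord (t i) == cyc k d (s i)]].

(* w(sigma,tau) = 1/d if tau = sigma^{(k,d)} (such (k,d) is unique), 0 otherwise *)
Definition weight (C : numClosedFieldType) n (s t : {perm 'I_n}) : C :=
  if [pick kd : 'I_n * 'I_n | is_move s t kd.1 kd.2] is Some kd
  then (nat_of_ord kd.2)%:R^-1 else 0.

Definition s_t (C : numClosedFieldType) n w (U : nat -> oper C n w) (t : nat) : C :=
  \sum_(s : {perm 'I_n}) \sum_(u : {perm 'I_n})
     weight C s u * `|dotp (psi U s t) (psi U u t)|.

From mathcomp Require Import all_boot all_order all_algebra all_fingroup.
From mathcomp Require Import ring zify.
Import Order.TTheory GRing.Theory Num.Theory.
Local Open Scope ring_scope.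
Set Implicit Arguments. Unset Strict Implicit.

(* After T queries every state psi^T_sigma is still a unit vector, and
   w(sigma, tau) <> 0 forces sigma <> tau, while at t = 0 all states equal
   U_0|0>, so s_0 = sum w.  For sigma <> tau split the identity as
   E_sigma + Q with Q = sum_(rho <> sigma) E_rho >= E_tau.  Cauchy-Schwarz for
   the positive forms E_sigma and Q bounds |<psi_sigma|psi_tau>| by
   sqrt(a b) + sqrt(a' b'), where a + a' = b + b' = 1 and a, b' >= 1 - eps;
   the Lagrange identity
     (sqrt(a b) + sqrt(a' b'))^2 + (sqrt(a b') - sqrt(a' b))^2 = 1
   together with sqrt(a b') - sqrt(a' b) >= 1 - 2 eps >= 0 gives the bound
   sqrt(1 - (1 - 2 eps)^2) = 2 sqrt(eps (1 - eps)). *)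

Section ScalarBounds.
Variable C : numClosedFieldType.

(* The value at (c, d) of the sesquilinear form with Gram matrix [[a, X], [Y, b]]. *)
Definition qf2 (a X Y b c d : C) : C :=
  c^* * c * a + c^* * d * X + d^* * c * Y + d^* * d * b.

Lemma qf2_10 (a X Y b : C) : qf2 a X Y b 1 0 = a.
Proof. by rewrite /qf2 conjC1 conjC0; ring. Qed.

Lemma qf2_01 (a X Y b : C) : qf2 a X Y b 0 1 = b.
Proof. by rewrite /qf2 conjC1 conjC0; ring. Qed.

Lemma qf2_real_conj (a X Y b : C) :
  (forall c d, qf2 a X Y b c d \is Num.real) -> Y = X^*.
Proof.
move=> hreal.
have ii : 'i * 'i = -1 :> C by rewrite -expr2 sqrCi.
have /CrealP hsum : X + Y \is Num.real.
  have -> : X + Y = qf2 a X Y b 1 1 - qf2 a X Y b 1 0 - qf2 a X Y b 0 1.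
    by rewrite qf2_10 qf2_01 /qf2 conjC1; ring.
  by rewrite !rpredB.
have /CrealP hdiff : 'i * (X - Y) \is Num.real.
  have -> : 'i * (X - Y) = qf2 a X Y b 1 'i - qf2 a X Y b 1 0 - qf2 a X Y b 0 1.
    by rewrite qf2_10 qf2_01 /qf2 conjC1 conjCi; ring: ii.
  by rewrite !rpredB.
rewrite !(rmorphD, rmorphM, rmorphN) /= conjCi in hsum hdiff.
have hdiff' : X^* - Y^* = Y - X.
  apply: (mulfI (neq0Ci C)); apply: oppr_inj.
  by rewrite -mulNr hdiff; ring.
have two : (2 : C) != 0 by rewrite pnatr_eq0.
apply: (mulIf two).
have -> : X^* * 2 = (X^* + Y^*) + (X^* - Y^*) by ring.
by rewrite hsum hdiff'; ring.
Qed.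

Lemma qf2_ge0_normX (a X Y b : C) :
  (forall c d, 0 <= qf2 a X Y b c d) -> `|X| ^+ 2 <= a * b.
Proof.
move=> hge0; have eY := qf2_real_conj (fun c d => ger0_real (hge0 c d)); subst Y.
have ha : 0 <= a by rewrite -(qf2_10 a X X^* b).
have hb : 0 <= b by rewrite -(qf2_01 a X X^* b).
have hX : 0 <= X * X^* by rewrite -normCK exprn_ge0.
rewrite normCK; have [ab0|ab_gt0] := eqVneq (a + b) 0.
- move/eqP: ab0; rewrite paddr_eq0 // => /andP[/eqP a0 /eqP b0].
  have expand : qf2 0 X X^* 0 1 (- X^*) = - (X * X^* + X * X^*).
    by rewrite /qf2 conjC1 rmorphN /= conjCK; ring.
  have := hge0 1 (- X^*); rewrite a0 b0 expand mulr0 oppr_ge0 => h.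
  by apply: le_trans h; rewrite lerDl.
- have expand : qf2 a X X^* b b (- X^*) + qf2 a X X^* b (- X) a
                 = (a + b) * (a * b - X * X^*).
    by rewrite /qf2 !rmorphN /= conjCK (geC0_conj ha) (geC0_conj hb); ring.
  have := addr_ge0 (hge0 b (- X^*)) (hge0 (- X) a).
  by rewrite expand pmulr_rge0 ?subr_ge0 // lt_def ab_gt0 addr_ge0.
Qed.

Lemma sqrt_fidelity_le (e a a' b b' : C) :
  0 <= e -> e < 1 / 2 -> a + a' = 1 -> b + b' = 1 -> 0 <= a' -> 0 <= b ->
  1 - e <= a -> 1 - e <= b' ->
  sqrtC a * sqrtC b + sqrtC a' * sqrtC b' <= 2 * sqrtC (e * (1 - e)).
Proof.
move=> e_ge0 e_lt_half sum_a sum_b ha' hb hea heb'.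
have h2e : 0 <= 1 - e - e.
  by rewrite -addrA -opprD subr_ge0 -mulr2n -mulr_natr -ler_pdivlMr ?ltr0n ?ltW.
have h1e : 0 <= 1 - e by apply: le_trans h2e _; rewrite gerBl.
have ha := le_trans h1e hea; have hb' := le_trans h1e heb'.
have ha'e : a' <= e by move: hea; rewrite -sum_a lerBlDr lerD2l.
have hbe : b <= e by move: heb'; rewrite -sum_b lerBlDr [b' + e]addrC lerD2r.
set p := sqrtC a; set p' := sqrtC a'; set q := sqrtC b; set q' := sqrtC b'.
have lagrange : (p * q + p' * q') ^+ 2 + (p * q' - p' * q) ^+ 2 = 1.
  transitivity ((p ^+ 2 + p' ^+ 2) * (q ^+ 2 + q' ^+ 2)); first by ring.
  by rewrite !sqrtCK sum_a sum_b mulr1.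
have gap : 1 - e - e <= p * q' - p' * q.
  have -> : 1 - e - e = sqrtC (1 - e) * sqrtC (1 - e) - sqrtC e * sqrtC e.
    by rewrite -!expr2 !sqrtCK.
  by apply: lerB; apply: ler_pM; rewrite ?sqrtC_ge0 ?ler_sqrtC ?nnegrE.
rewrite -(ler_pXn2r (isT : (0 < 2)%N)) ?nnegrE; first last.
- by rewrite mulr_ge0 ?ler0n ?sqrtC_ge0 ?mulr_ge0.
- by rewrite addr_ge0 ?mulr_ge0 ?sqrtC_ge0.
rewrite -(addrK ((p * q' - p' * q) ^+ 2) (_ ^+ 2)) lagrange exprMn sqrtCK.
apply: le_trans (lerB (lexx 1) (_ : (1 - e - e) ^+ 2 <= _)) _.
  by rewrite ler_pXn2r ?nnegrE ?(le_trans h2e gap).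
by rewrite le_eqVlt; apply/orP; left; apply/eqP; rewrite (_ : 2 ^+ 2 = 4); ring.
Qed.
End ScalarBounds.

Section Forms.
Variables (C : numClosedFieldType) (n w : nat).
Notation vect := (vect C n w).
Notation oper := (oper C n w).

Definition lincomb (c : C) (u : vect) (d : C) (v : vect) : vect :=
  fun x => c * u x + d * v x.

Definition form (A : oper) (u v : vect) : C := dotp u (apply A v).

Lemma dotp_lincombl (v : vect) c u1 d u2 :
  dotp (lincomb c u1 d u2) v = c^* * dotp u1 v + d^* * dotp u2 v.
Proof.
rewrite /dotp !mulr_sumr -big_split; apply: eq_bigr => x _ /=.
by rewrite /lincomb rmorphD !rmorphM /=; ring.
Qed.

Lemma dotp_lincombr (u : vect) c v1 d v2 :
  dotp u (lincomb c v1 d v2) = c * dotp u v1 + d * dotp u v2.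
Proof.
rewrite /dotp !mulr_sumr -big_split; apply: eq_bigr => x _ /=.
by rewrite /lincomb; ring.
Qed.

Lemma apply_lincomb (A : oper) c v1 d v2 x :
  apply A (lincomb c v1 d v2) x = lincomb c (apply A v1) d (apply A v2) x.
Proof.
by rewrite /apply /lincomb !mulr_sumr -big_split; apply: eq_bigr => y _ /=; ring.
Qed.

Lemma form_lincomb (A : oper) u v c d :
  form A (lincomb c u d v) (lincomb c u d v) =
  qf2 (form A u u) (form A u v) (form A v u) (form A v v) c d.
Proof.
have -> : form A (lincomb c u d v) (lincomb c u d v) =
          dotp (lincomb c u d v) (lincomb c (apply A u) d (apply A v)).
  by apply: eq_bigr => x _; rewrite apply_lincomb.
by rewrite dotp_lincombl !dotp_lincombr /qf2 /form; ring.
Qed.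

Lemma psd_form_normX (A : oper) u v :
  psd A -> `|form A u v| ^+ 2 <= form A u u * form A v v.
Proof.
move=> psdA; apply: (@qf2_ge0_normX _ _ _ (form A v u)) => c d.
by rewrite -form_lincomb; apply: psdA.
Qed.

Lemma psd_form_norm (A : oper) u v :
  psd A -> `|form A u v| <= sqrtC (form A u u) * sqrtC (form A v v).
Proof.
move=> psdA; have hu : 0 <= form A u u := psdA u; have hv : 0 <= form A v v := psdA v.
rewrite -sqrtCM ?nnegrE // -(sqrCK (normr_ge0 _)) ler_sqrtC ?nnegrE ?mulr_ge0 //.
exact: psd_form_normX.
Qed.

Lemma form_sum (I : finType) (P : pred I) (E : I -> oper) u v :
  form (fun x y => \sum_(i | P i) E i x y) u v = \sum_(i | P i) form (E i) u v.
Proof.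
rewrite /form /dotp /apply exchange_big /=; apply: eq_bigr => x _.
rewrite -mulr_sumr exchange_big /=; congr (_ * _).
by apply: eq_bigr => y _; rewrite mulr_suml.
Qed.

Lemma form_idE (A : oper) u v :
  (forall x y, A x y = (x == y)%:R) -> form A u v = dotp u v.
Proof.
move=> A1; apply: eq_bigr => x _; congr (_ * _).
rewrite /apply (bigD1 x) //= A1 eqxx mul1r big1 ?addr0 // => y /negbTE yx.
by rewrite A1 eq_sym yx mul0r.
Qed.

Lemma povm_overlap_le (I : finType) (E : I -> oper) (s u : I) (p f : vect) e :
  (forall i, psd (E i)) -> (forall x y, \sum_i E i x y = (x == y)%:R) ->
  s != u -> dotp p p = 1 -> dotp f f = 1 -> 0 <= e -> e < 1 / 2 ->
  1 - e <= form (E s) p p -> 1 - e <= form (E u) f f ->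
  `|dotp p f| <= 2 * sqrtC (e * (1 - e)).
Proof.
move=> psdE sumE su p1 f1 e_ge0 e_lt_half hp hf.
pose Q : oper := fun x y => \sum_(i | i != s) E i x y.
have formQ g h : form Q g h = \sum_(i | i != s) form (E i) g h by exact: form_sum.
have split_dotp g h : dotp g h = form (E s) g h + form Q g h.
  by rewrite -(form_idE g h sumE) form_sum (bigD1 s) //= formQ.
have psdQ : psd Q.
  by move=> g; rewrite -/(form Q g g) formQ; apply: sumr_ge0 => i _; apply: psdE.
have hQf : 1 - e <= form Q f f.
  rewrite formQ (bigD1 u) 1?eq_sym //= (le_trans hf) // lerDl.
  by apply: sumr_ge0 => i _; apply: psdE.
apply: le_trans (_ : sqrtC (form (E s) p p) * sqrtC (form (E s) f f) +
                     sqrtC (form Q p p) * sqrtC (form Q f f) <= _).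
  by rewrite split_dotp (le_trans (ler_normD _ _)) // lerD ?psd_form_norm.
by apply: sqrt_fidelity_le; rewrite -?split_dotp //; [apply: psdQ | apply: psdE].
Qed.

End Forms.

Section Queries.
Variables (C : numClosedFieldType) (n w : nat).
Notation vect := (vect C n w).
Notation oper := (oper C n w).

Lemma unitary_dotp (A : oper) u v : unitary A -> dotp (apply A u) (apply A v) = dotp u v.
Proof.
move=> unitA; rewrite /dotp /apply.
transitivity (\sum_x \sum_y \sum_z ((A x y)^* * (u y)^* * (A x z * v z))).
  apply: eq_bigr => x _; rewrite rmorph_sum mulr_suml; apply: eq_bigr => y _.
  by rewrite mulr_sumr; apply: eq_bigr => z _; rewrite rmorphM.
rewrite exchange_big; apply: eq_bigr => y _; rewrite exchange_big /=.
have inner z : \sum_x ((A x y)^* * (u y)^* * (A x z * v z)) = (u y)^* * v z * (y == z)%:R.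
  by rewrite -unitA mulr_sumr; apply: eq_bigr => x _; ring.
rewrite (bigD1 y) //= inner eqxx mulr1 big1 ?addr0 // => z /negbTE zy.
by rewrite inner eq_sym zy mulr0.
Qed.

Definition oracle_label (s : {perm 'I_n}) (x : Idx n w) : Idx n w :=
  let '(i, j, b, c) := x in (i, j, addb b (cmpM s i j), c).

Lemma oracleE s (v : vect) x : oracle s v x = v (oracle_label s x).
Proof. by case: x => [[[i j] b] c]. Qed.

Lemma oracle_labelK s : involutive (oracle_label s).
Proof. by case=> [[[i j] b] c] /=; rewrite addbK. Qed.

Lemma oracle_dotp s (u v : vect) : dotp (oracle s u) (oracle s v) = dotp u v.
Proof.
rewrite /dotp [RHS](reindex_inj (inv_inj (oracle_labelK s))).
by apply: eq_bigr => x _; rewrite !oracleE.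
Qed.

Lemma ket0_dotp : (0 < n)%N -> dotp (@ket0 C n w) (@ket0 C n w) = 1.
Proof.
move=> n_gt0; pose x0 : Idx n w := (Ordinal n_gt0, Ordinal n_gt0, false, [ffun => false]).
rewrite /dotp (bigD1 x0) //= big1 ?addr0.
  rewrite (_ : [forall k, _] = true); last by apply/forallP => k; rewrite ffunE.
  by rewrite conjC_nat mulr1.
case=> [[[i j] b] c] /= neq_x0; apply/eqP; rewrite mulf_eq0 pnatr_eq0 eqb0.
apply/orP; right; apply: contra_neqN neq_x0.
case/and4P => /eqP i0 /eqP j0 /negbTE -> /forallP c0.
congr (_, _, _, _); try exact: val_inj.
by apply/ffunP => k; rewrite ffunE; apply/negbTE.
Qed.

Lemma psi_dotp (U : nat -> oper) s T :
  (0 < n)%N -> (forall t, (t <= T)%N -> unitary (U t)) ->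
  forall t, (t <= T)%N -> dotp (psi U s t) (psi U s t) = 1.
Proof.
move=> n_gt0 unitU; elim=> [|t IH] ltT /=.
  by rewrite unitary_dotp ?ket0_dotp //; apply: unitU.
by rewrite unitary_dotp ?oracle_dotp ?IH ?(ltnW ltT) //; apply: unitU.
Qed.

End Queries.

Lemma weight_ge0 (C : numClosedFieldType) n (s u : {perm 'I_n}) : 0 <= weight C s u.
Proof. by rewrite /weight; case: pickP => [kd _|_] //; rewrite invr_ge0 ler0n. Qed.

Lemma weight_neq0 (C : numClosedFieldType) n (s u : {perm 'I_n}) :
  weight C s u != 0 -> s != u.
Proof.
rewrite /weight; case: pickP => [[k d] /= move_kd _|_]; last by rewrite eqxx.
apply: contraTneq move_kd => <-; apply/negP => /and3P[d_gt0 _ /forallP/(_ (s^-1 k)%g)].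
by rewrite permKV /cyc ltnn eqxx => /eqP; lia.
Qed.

Lemma s_t0E (C : numClosedFieldType) n w (U : nat -> oper C n w) :
  (0 < n)%N -> unitary (U 0%N) -> s_t U 0 = \sum_(s : {perm 'I_n}) \sum_u weight C s u.
Proof.
move=> n_gt0 unitU0; apply: eq_bigr => s _; apply: eq_bigr => u _.
by rewrite /= unitary_dotp // ket0_dotp // normr1 mulr1.
Qed.

Theorem lemma2 (C : numClosedFieldType) (n w T : nat) (eps : C)
  (U : nat -> oper C n w) (E : {perm 'I_n} -> oper C n w) :
  (2 <= n)%N -> 0 <= eps -> eps < 1 / 2 ->
  (forall t, (t <= T)%N -> unitary (U t)) ->
  povm E ->
  (forall s : {perm 'I_n}, 1 - eps <= dotp (psi U s T) (apply (E s) (psi U s T))) ->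
  s_t U T <= 2 * sqrtC (eps * (1 - eps)) * s_t U 0.
Proof.
move=> n_ge2 eps_ge0 eps_lt_half unitU [psdE sumE] success.
have n_gt0 : (0 < n)%N by apply: leq_trans n_ge2.
have psiT_unit s : dotp (psi U s T) (psi U s T) = 1 := psi_dotp s n_gt0 unitU (leqnn T).
rewrite (s_t0E n_gt0 (unitU 0%N (leq0n T))) mulr_sumr; apply: ler_sum => s _.
rewrite mulr_sumr; apply: ler_sum => u _; rewrite [leRHS]mulrC.
have [->|w_neq0] := eqVneq (weight C s u) 0; first by rewrite !mul0r.
apply: ler_wpM2l; first exact: weight_ge0.
apply: (povm_overlap_le psdE sumE (weight_neq0 w_neq0)) => //; exact: success.
Qed.
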